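(* If an online algorithm in the discrete-time model is $\alpha$-competitive for MaxProb (all-ties-win) when the true prior is $F_K$ and $\beta$-competitive when the true prior is $F_k$ for every $k\in[K-1]$, then there is a minor-oblivious algorithm with the same guarantees.
   Context: Discrete-time model: $n$ values $x_1,\dots,x_n$ i.i.d. from a true prior are revealed in the order $x_1,\dots,x_n$; an online algorithm irrevocably accepts at most one; $\mathrm{ALG}$ is the accepted index. MaxProb with all-ties-win: success iff the accepted value equals $\max_i x_i$; the competitive ratio is the success probability. $[K]=\{1,\dots,K\}$; $\tilde F$ is a distribution on $[K]$ with pmf $\tilde f$, $\tilde f(1)>0$; $F_k(\ell)=\tilde F(\ell)/\tilde F(k)$ for $\ell\le k$ and $F_k(\ell)=1$ for $\ell>k$. The conditional acceptance probability of an algorithm is $\mathrm{Acc}_t(\mathbf x_{1:t})=\Pr[\mathrm{ALG}=t\mid\mathrm{ALG}\ge t,(x_1,\dots,x_t)=\mathbf x_{1:t}]$. An algorithm is minor-oblivious if $\mathrm{Acc}_t(\mathbf x_{1:t})=\mathrm{Acc}_t(\mathbf y_{1:t})$ whenever $x_t=y_t=\max\mathbf x_{1:t}=\max\mathbf y_{1:t}$. *)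

From HB Require Import structures.
From mathcomp Require Import all_boot all_order all_algebra.
From mathcomp Require Import reals.
Set Implicit Arguments. Unset Strict Implicit. Unset Printing Implicit Defensive.
Import Order.TTheory GRing.Theory Num.Theory.
Local Open Scope ring_scope.

(* Values: [K] = {1,...,K} is represented by 'I_K, the ordinal i standing
   for the value i+1 (order-preserving, so maxima are unaffected). *)

Definition Ftilde (R : realType) (K : nat) (ft : 'I_K -> R) (k : nat) : R :=
  \sum_(i : 'I_K | (val i < k)%N) ft i.

Definition prior_k (R : realType) (K : nat) (ft : 'I_K -> R) (k : nat)
  (i : 'I_K) : R :=
  if (val i < k)%N then ft i / Ftilde ft k else 0.

(* An online algorithm is given by its conditional acceptance probabilities:
   acc s = Acc_t(x_{1:t}) for the prefix s = x_{1:t} (t = size s). *)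
Definition algorithm (R : realType) (K : nat) := seq 'I_K -> R.

Definition valid_alg (R : realType) (K n : nat) (acc : algorithm R K) : Prop :=
  forall s : seq 'I_K, (0 < size s <= n)%N -> 0 <= acc s <= 1.

(* Pr[ALG = t | x] (t is 0-based: index t means the (t+1)-th arrival) *)
Definition pr_alg_eq (R : realType) (K n : nat) (acc : algorithm R K)
  (x : n.-tuple 'I_K) (t : 'I_n) : R :=
  (\prod_(s < t) (1 - acc (take s.+1 x))) * acc (take t.+1 x).

Definition success (R : realType) (K n : nat) (p : 'I_K -> R)
  (acc : algorithm R K) : R :=
  \sum_(x : n.-tuple 'I_K)
     (\prod_(i < n) p (tnth x i)) *
     (\sum_(t < n) pr_alg_eq acc x t *
        (if val (tnth x t) == \max_(i <- x) val i then 1 else 0)).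

Definition minor_oblivious (R : realType) (K n : nat) (acc : algorithm R K)
  : Prop :=
  forall (p1 p2 : seq 'I_K) (v : 'I_K),
    size p1 = size p2 -> (size p1 < n)%N ->
    \max_(i <- rcons p1 v) val i = val v ->
    \max_(i <- rcons p2 v) val i = val v ->
    acc (rcons p1 v) = acc (rcons p2 v).

From HB Require Import structures.
From mathcomp Require Import all_boot all_order all_algebra.
From mathcomp Require Import reals.
From mathcomp Require Import zify ring.
Import Order.TTheory GRing.Theory Num.Theory.
Local Open Scope ring_scope.
Set Implicit Arguments. Unset Strict Implicit.

(* Write M(t, v) for the f~-weighted probability that the first t values are at
   most v, the algorithm passes on all of them and accepts x_(t+1) = v.  A win at
   value v only involves values at most v, and below k the prior F_k is
   proportional to f~; hence the success probability under every F_k is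
   determined by the numbers M(t, v).  It therefore suffices to build a
   minor-oblivious algorithm with the same M.  It accepts a prefix maximum v at
   step t+1 with probability M(t, v) / N(t, v), where N(t, u) is its own
   f~-weighted probability of passing t values that stay at most u.  N obeys a
   recursion involving only the M's, and the same recursion run on the original
   algorithm gives an upper bound for its passing probability, which dominates
   M(t, v); so these ratios are probabilities. *)


Section SumSeqs.
Variables (T : finType) (R : numDomainType).
Implicit Types (f g : seq T -> R) (m : nat).

Fixpoint sum_seqs m f : R :=
  if m is m'.+1 then \sum_(y : T) sum_seqs m' (fun s => f (y :: s)) else f [::].

Lemma big_tuple_cons m (F : m.+1.-tuple T -> R) :
  \sum_(x : m.+1.-tuple T) F x = \sum_(y : T) \sum_(x : m.-tuple T) F [tuple of y :: x].
Proof.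
rewrite pair_big /= (reindex (fun p : T * m.-tuple T => [tuple of p.1 :: p.2])) //=.
exists (fun x : m.+1.-tuple T => (thead x, [tuple of behead x])).
  by move=> [y x] _ /=; congr pair; apply: val_inj.
by move=> x _; apply: val_inj => /=; case: x => -[|a s].
Qed.

Lemma sum_tuples m f : \sum_(x : m.-tuple T) f x = sum_seqs m f.
Proof.
elim: m f => [|m IH] f /=.
  by rewrite (big_pred1 [tuple]) // => t; rewrite [t]tuple0; apply/esym/eqP.
by rewrite big_tuple_cons; apply: eq_bigr => y _; exact: (IH (fun s => f (y :: s))).
Qed.

Lemma eq_sum_seqs m f g : (forall s, size s = m -> f s = g s) ->
  sum_seqs m f = sum_seqs m g.
Proof.
elim: m f g => [|m IH] f g fg /=; first exact: fg.
by apply: eq_bigr => y _; apply: IH => s sz; apply: fg; rewrite /= sz.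
Qed.

Lemma ler_sum_seqs m f g : (forall s, size s = m -> f s <= g s) ->
  sum_seqs m f <= sum_seqs m g.
Proof.
elim: m f g => [|m IH] f g fg /=; first exact: fg.
by apply: ler_sum => y _; apply: IH => s sz; apply: fg; rewrite /= sz.
Qed.

Lemma sum_seqs_ge0 m f : (forall s, size s = m -> 0 <= f s) -> 0 <= sum_seqs m f.
Proof.
elim: m f => [|m IH] f f0 /=; first exact: f0.
by apply: sumr_ge0 => y _; apply: IH => s sz; apply: f0; rewrite /= sz.
Qed.

Lemma sum_seqs_cat m1 m2 f :
  sum_seqs (m1 + m2) f = sum_seqs m1 (fun q => sum_seqs m2 (fun r => f (q ++ r))).
Proof. by elim: m1 f => [|m1 IH] f //=; apply: eq_bigr => y _; rewrite IH. Qed.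

Lemma sum_seqs_rcons m f :
  sum_seqs m.+1 f = sum_seqs m (fun q => \sum_(y : T) f (rcons q y)).
Proof.
rewrite -addn1 sum_seqs_cat; apply: eq_sum_seqs => q _ /=.
by apply: eq_bigr => y _; rewrite cats1.
Qed.

Lemma exchange_sum_seqs (I : finType) m (F : I -> seq T -> R) :
  sum_seqs m (fun s => \sum_(i : I) F i s) = \sum_(i : I) sum_seqs m (F i).
Proof.
elim: m F => [|m IH] F //=.
by under eq_bigr => y _ do rewrite (IH (fun i s => F i (y :: s))); rewrite exchange_big.
Qed.

Lemma sum_seqs_mull m c f : sum_seqs m (fun s => c * f s) = c * sum_seqs m f.
Proof.
by elim: m f => [|m IH] f //=; rewrite mulr_sumr; apply: eq_bigr => y _; exact: IH.
Qed.

Lemma sum_seqs_mulr m c f : sum_seqs m (fun s => f s * c) = sum_seqs m f * c.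
Proof. by rewrite mulrC -sum_seqs_mull; apply: eq_sum_seqs => s _; rewrite mulrC. Qed.

Lemma sum_seqsB m f g :
  sum_seqs m (fun s => f s - g s) = sum_seqs m f - sum_seqs m g.
Proof.
by elim: m f g => [|m IH] f g //=; rewrite -sumrB; apply: eq_bigr => y _; exact: IH.
Qed.

End SumSeqs.

Section SuccessDecomposition.
Variables (R : realType) (K : nat).
Implicit Types (p f : 'I_K -> R) (acc : algorithm R K) (s q w : seq 'I_K).

Definition weight p s : R := \prod_(y <- s) p y.
Definition seqmax s : nat := \max_(i <- s) val i.
Definition survival acc s : R := \prod_(j < size s) (1 - acc (take j.+1 s)).

Definition accept_mass p acc t (v : 'I_K) (u : nat) : R :=
  sum_seqs t (fun q =>
    weight p q * survival acc q * acc (rcons q v) * (seqmax q <= u)%N%:R).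

Definition below_mass p (v : 'I_K) b : R :=
  sum_seqs b (fun w => weight p w * (seqmax w <= val v)%N%:R).

Definition stop_at acc t s : R :=
  (\prod_(j < t) (1 - acc (take j.+1 s))) * acc (take t.+1 s).

Definition wins_at t s : bool :=
  if drop t s is v :: _ then val v == seqmax s else false.

Lemma weight_cat p s1 s2 : weight p (s1 ++ s2) = weight p s1 * weight p s2.
Proof. by rewrite /weight big_cat. Qed.

Lemma weight_cons p y s : weight p (y :: s) = p y * weight p s.
Proof. by rewrite /weight big_cons. Qed.

Lemma weight_rcons p s y : weight p (rcons s y) = weight p s * p y.
Proof. by rewrite -cats1 weight_cat /weight big_seq1. Qed.

Lemma seqmax_cat s1 s2 : seqmax (s1 ++ s2) = maxn (seqmax s1) (seqmax s2).
Proof. by rewrite /seqmax big_cat. Qed.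

Lemma seqmax_cons y s : seqmax (y :: s) = maxn (val y) (seqmax s).
Proof. by rewrite /seqmax big_cons. Qed.

Lemma seqmax_rcons s y : seqmax (rcons s y) = maxn (seqmax s) (val y).
Proof. by rewrite -cats1 seqmax_cat seqmax_cons /seqmax big_nil maxn0. Qed.

Lemma survival_rcons acc q y :
  survival acc (rcons q y) = survival acc q * (1 - acc (rcons q y)).
Proof.
rewrite /survival size_rcons big_ord_recr /= take_oversize ?size_rcons //.
by congr (_ * _); apply: eq_bigr => j _; rewrite -cats1 takel_cat.
Qed.

Lemma stop_at_cat acc q v w :
  stop_at acc (size q) (q ++ v :: w) = survival acc q * acc (rcons q v).
Proof.
rewrite /stop_at.
have -> : take (size q).+1 (q ++ v :: w) = rcons q v.
  by elim: q => [|a q /= ->]; rewrite /= ?take0.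
congr (_ * _); apply: eq_bigr => j _; rewrite takel_cat //.
Qed.

Lemma wins_at_cat q v w : wins_at (size q) (q ++ v :: w) =
  (seqmax q <= val v)%N && (seqmax w <= val v)%N.
Proof.
by rewrite /wins_at drop_size_cat // seqmax_cat seqmax_cons; apply/eqP/andP; lia.
Qed.

Lemma success_sum_seqs n p acc : success n p acc =
  \sum_(t < n) sum_seqs n (fun s => weight p s * stop_at acc t s * (wins_at t s)%:R).
Proof.
rewrite /success; under eq_bigr => x _ do rewrite mulr_sumr.
rewrite exchange_big; apply: eq_bigr => t _; rewrite -sum_tuples.
apply: eq_bigr => x _; rewrite /weight [in RHS]big_tuple /pr_alg_eq /stop_at mulrA.
rewrite /wins_at (drop_nth (tnth x t)) ?size_tuple // -tnth_nth.
by case: (_ == _).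
Qed.

(* The winning arrival t splits a sample as q ++ v :: w: the algorithm must pass
   on q and accept v, and v must dominate both q and w. *)
Lemma success_decomposition n p acc : success n p acc =
  \sum_(t < n) \sum_(v : 'I_K)
     p v * below_mass p v (n - t.+1) * accept_mass p acc t v (val v).
Proof.
rewrite success_sum_seqs; apply: eq_bigr => t _.
set b := (n - t.+1)%N; set G := fun s => _.
have -> : sum_seqs n G = sum_seqs (t + b.+1) G.
  by congr sum_seqs; have := ltn_ord t; lia.
rewrite sum_seqs_cat /=; transitivity (sum_seqs t (fun q => \sum_(v : 'I_K)
   weight p q * survival acc q * acc (rcons q v) * (seqmax q <= val v)%N%:R *
   (p v * below_mass p v b))).
  apply: eq_sum_seqs => q sq; apply: eq_bigr => v _.
  rewrite /below_mass -!sum_seqs_mull; apply: eq_sum_seqs => w _.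
  rewrite /G -sq stop_at_cat wins_at_cat -mulnb natrM weight_cat weight_cons.
  ring.
by rewrite exchange_sum_seqs; apply: eq_bigr => v _; rewrite sum_seqs_mulr mulrC.
Qed.

Lemma weight_scale p f c q u : (forall i : 'I_K, (val i <= u)%N -> p i = c * f i) ->
  (seqmax q <= u)%N -> weight p q = c ^+ size q * weight f q.
Proof.
move=> pf; elim: q => [|y q IH]; first by rewrite /weight !big_nil mulr1.
rewrite seqmax_cons geq_max => /andP [yu qu].
by rewrite !weight_cons IH // pf // exprS; ring.
Qed.

Lemma accept_mass_scale p f c acc t v u :
  (forall i : 'I_K, (val i <= u)%N -> p i = c * f i) ->
  accept_mass p acc t v u = c ^+ t * accept_mass f acc t v u.
Proof.
move=> pf; rewrite /accept_mass -sum_seqs_mull; apply: eq_sum_seqs => q sq.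
case: (boolP (seqmax q <= u)%N) => qu; last by rewrite !mulr0.
by rewrite (weight_scale pf qu) sq; ring.
Qed.

Lemma success_prior_k_eq n ft k acc1 acc2 :
  (forall (t : 'I_n) v,
     accept_mass ft acc1 t v (val v) = accept_mass ft acc2 t v (val v)) ->
  success n (prior_k ft k) acc1 = success n (prior_k ft k) acc2.
Proof.
move=> eq12; rewrite !success_decomposition; apply: eq_bigr => t _.
apply: eq_bigr => v _.
case: (ltnP (val v) k) => vk; last by rewrite /prior_k ltnNge vk /= !mul0r.
have scale i : (val i <= val v)%N -> prior_k ft k i = (Ftilde ft k)^-1 * ft i.
  by move=> iv; rewrite /prior_k (leq_ltn_trans iv vk) mulrC.
by rewrite !(accept_mass_scale _ _ _ scale) eq12.
Qed.

End SuccessDecomposition.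

Section MinorObliviousVersion.
Variables (R : realType) (K n : nat) (ft : 'I_K -> R) (acc : algorithm R K).
Hypotheses (ft_ge0 : forall i, 0 <= ft i) (acc_valid : valid_alg n acc).

Definition pass_mass (b : algorithm R K) t (u : nat) : R :=
  sum_seqs t (fun q => weight ft q * survival b q * (seqmax q <= u)%N%:R).

Definition mass_below (u : nat) : R := \sum_(y : 'I_K) ft y * (val y <= u)%N%:R.

Definition record_mass t (v : 'I_K) : R := accept_mass ft acc t v (val v).

(* [pass_target] obeys the recursion [pass_mass_rec] that the passing mass of
   any algorithm with record masses [record_mass] must satisfy. *)
Fixpoint pass_target t (u : nat) : R :=
  if t is t'.+1 then
    mass_below u * pass_target t' u -
    \sum_(y : 'I_K) ft y * (val y <= u)%N%:R * record_mass t' y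
  else 1.

(* When the target vanishes the ratio is 0, which is harmless: then so is the
   record mass ([record_accept_target]). *)
Definition record_accept t (v : 'I_K) : R := record_mass t v / pass_target t (val v).

Definition oblivious_acc : algorithm R K := fun s =>
  if s is x :: s' then
    (seqmax (belast x s') <= val (last x s'))%N%:R * record_accept (size s') (last x s')
  else 0.

Lemma oblivious_acc_rcons q v :
  oblivious_acc (rcons q v) = (seqmax q <= val v)%N%:R * record_accept (size q) v.
Proof.
by case: q => [|x q]; rewrite /= ?belast_rcons ?last_rcons ?size_rcons.
Qed.

Lemma pass_mass_rec (b : algorithm R K) t u :
  pass_mass b t.+1 u = mass_below u * pass_mass b t u -
    \sum_(y : 'I_K) ft y * (val y <= u)%N%:R * accept_mass ft b t y u.
Proof.
rewrite /pass_mass sum_seqs_rcons; transitivity (sum_seqs t (fun q =>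
  mass_below u * (weight ft q * survival b q * (seqmax q <= u)%N%:R) -
  \sum_(y : 'I_K) ft y * (val y <= u)%N%:R *
    (weight ft q * survival b q * b (rcons q y) * (seqmax q <= u)%N%:R))).
  apply: eq_sum_seqs => q _; rewrite /mass_below mulr_suml -sumrB.
  apply: eq_bigr => y _.
  by rewrite weight_rcons survival_rcons seqmax_rcons geq_max -mulnb natrM; ring.
rewrite sum_seqsB sum_seqs_mull exchange_sum_seqs; congr (_ - _).
by apply: eq_bigr => y _; rewrite sum_seqs_mull.
Qed.

Lemma acc_rcons_bounds q y : (size q < n)%N -> 0 <= acc (rcons q y) <= 1.
Proof. by move=> qn; apply: acc_valid; rewrite size_rcons. Qed.

Lemma passing_weight_ge0 q : (size q <= n)%N -> 0 <= weight ft q * survival acc q.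
Proof.
move=> qn; rewrite mulr_ge0 ?prodr_ge0 // => j _; rewrite subr_ge0.
have /andP [_ ->] // : 0 <= acc (take j.+1 q) <= 1.
by apply: acc_valid; rewrite size_take_min; have := ltn_ord j; lia.
Qed.

Lemma record_mass_ge0 t v : (t < n)%N -> 0 <= record_mass t v.
Proof.
move=> tn; apply: sum_seqs_ge0 => q sq; rewrite -sq in tn.
have /andP [a0 _] := acc_rcons_bounds v tn.
by rewrite mulr_ge0 ?ler0n // mulr_ge0 // passing_weight_ge0 // ltnW.
Qed.


Lemma record_mass_le_pass t v : (t < n)%N -> record_mass t v <= pass_mass acc t (val v).
Proof.
move=> tn; apply: ler_sum_seqs => q sq; rewrite -sq in tn.
have /andP [_ a1] := acc_rcons_bounds v tn.
have wq := passing_weight_ge0 (ltnW tn).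
by rewrite mulrAC ler_piMr // mulr_ge0.
Qed.

Lemma record_mass_le_accept t y u : (t < n)%N -> (val y <= u)%N ->
  record_mass t y <= accept_mass ft acc t y u.
Proof.
move=> tn yu; apply: ler_sum_seqs => q sq; rewrite -sq in tn.
have /andP [a0 _] := acc_rcons_bounds y tn.
have wq := passing_weight_ge0 (ltnW tn).
rewrite ler_wpM2l ?(mulr_ge0 wq a0) // ler_nat.
by case: (leqP (seqmax q) (val y)) => // qy; rewrite (leq_trans qy yu).
Qed.

Lemma pass_mass_le_target t u : (t <= n)%N -> pass_mass acc t u <= pass_target t u.
Proof.
elim: t => [|t IH] tn.
  by rewrite /pass_mass /= /weight /survival /seqmax !big_nil big_ord0 leq0n /= !mul1r.
have pass_le := IH (ltnW tn).
rewrite pass_mass_rec /=; apply: lerB.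
  by rewrite ler_wpM2l // sumr_ge0 // => y _; rewrite mulr_ge0.
apply: ler_sum => y _; case: (boolP (val y <= u)%N) => yu; last by rewrite !mulr0 !mul0r.
by rewrite ler_wpM2l ?mulr_ge0 // record_mass_le_accept.
Qed.


Lemma record_mass_le_target t v : (t < n)%N -> record_mass t v <= pass_target t (val v).
Proof.
by move=> tn; exact: le_trans (record_mass_le_pass v tn) (pass_mass_le_target _ (ltnW tn)).
Qed.

Lemma record_accept_target t v : (t < n)%N ->
  record_accept t v * pass_target t (val v) = record_mass t v.
Proof.
move=> tn; have le := record_mass_le_target v tn.
have [z|nz] := eqVneq (pass_target t (val v)) 0; last by rewrite divfK.
by rewrite z mulr0; rewrite z in le; apply: le_anti; rewrite le record_mass_ge0.
Qed.

Lemma record_accept_bounds t v : (t < n)%N -> 0 <= record_accept t v <= 1.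
Proof.
move=> tn; have r0 := record_mass_ge0 v tn; have le := record_mass_le_target v tn.
have [z|nz] := eqVneq (pass_target t (val v)) 0.
  by rewrite /record_accept z invr0 mulr0 lexx ler01.
have pos : 0 < pass_target t (val v) by rewrite lt_def nz (le_trans r0).
by rewrite /record_accept divr_ge0 ?(ltW pos) //= ler_pdivrMr // mul1r.
Qed.

Lemma accept_mass_oblivious t y u : (val y <= u)%N ->
  accept_mass ft oblivious_acc t y u = record_accept t y * pass_mass oblivious_acc t (val y).
Proof.
move=> yu; rewrite /accept_mass /pass_mass -sum_seqs_mull.
apply: eq_sum_seqs => q sq; rewrite oblivious_acc_rcons sq.
case: (leqP (seqmax q) (val y)) => [qy|yq]; last by rewrite /= !(mul0r, mulr0).
by rewrite (leq_trans qy yu) /= !mulr1 mul1r mulrC.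
Qed.

Lemma pass_mass_oblivious t u : (t <= n)%N -> pass_mass oblivious_acc t u = pass_target t u.
Proof.
elim: t u => [|t IH] u tn.
  by rewrite /pass_mass /= /weight /survival /seqmax !big_nil big_ord0 leq0n /= !mul1r.
have {}IH u' := IH u' (ltnW tn).
rewrite pass_mass_rec IH /=; congr (_ - _); apply: eq_bigr => y _.
case: (boolP (val y <= u)%N) => yu; last by rewrite !mulr0 !mul0r.
by rewrite accept_mass_oblivious // IH record_accept_target.
Qed.

Lemma accept_mass_oblivious_record t v : (t < n)%N ->
  accept_mass ft oblivious_acc t v (val v) = record_mass t v.
Proof.
move=> tn; rewrite accept_mass_oblivious // pass_mass_oblivious ?record_accept_target //.
exact: ltnW.
Qed.

Lemma oblivious_acc_valid : valid_alg n oblivious_acc.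
Proof.
case/lastP => [|q v] //; rewrite size_rcons => /andP [_ qn].
have ra := record_accept_bounds v qn.
by rewrite oblivious_acc_rcons; case: (_ <= _)%N; rewrite /= ?mul1r ?mul0r ?lexx ?ler01.
Qed.

Lemma oblivious_acc_minor_oblivious : minor_oblivious n oblivious_acc.
Proof.
move=> p1 p2 v eq_size _ max1 max2; rewrite !oblivious_acc_rcons eq_size.
have /maxn_idPr -> : maxn (seqmax p1) (val v) = val v by rewrite -seqmax_rcons.
by have /maxn_idPr -> : maxn (seqmax p2) (val v) = val v by rewrite -seqmax_rcons.
Qed.

Lemma success_oblivious_acc k :
  success n (prior_k ft k) oblivious_acc = success n (prior_k ft k) acc.
Proof. by apply: success_prior_k_eq => t v; apply: accept_mass_oblivious_record. Qed.

End MinorObliviousVersion.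

Unset Implicit Arguments.

Theorem mainTheorem19 (R : realType) (K n : nat) (ft : 'I_K -> R)
  (alpha beta : R) :
  (forall i, 0 <= ft i) -> \sum_i ft i = 1 ->
  (forall i : 'I_K, val i = 0%N -> 0 < ft i) ->
  forall acc : algorithm R K, valid_alg n acc ->
  alpha <= success n (prior_k ft K) acc ->
  (forall k : nat, (1 <= k <= K.-1)%N -> beta <= success n (prior_k ft k) acc) ->
  exists acc' : algorithm R K,
    [/\ valid_alg n acc', minor_oblivious n acc',
        alpha <= success n (prior_k ft K) acc' &
        forall k : nat, (1 <= k <= K.-1)%N ->
          beta <= success n (prior_k ft k) acc'].
Proof.
move=> ft_ge0 _ _ acc acc_valid success_K success_k.
exists (oblivious_acc ft acc); split.
- exact: oblivious_acc_valid.
- exact: oblivious_acc_minor_oblivious.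
- by rewrite success_oblivious_acc.
- by move=> k k_range; rewrite success_oblivious_acc // success_k.
Qed.
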